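(* Let $X$ be a locally compact separable metrizable space, let $Z\subseteq X$ be compact, and let $\mathcal U=(\mathfrak P,\{\mathcal U_{\mathfrak p}\},\{\Phi_{\mathfrak p\mathfrak q}\})$ be an abstract good coordinate system of $Z$ in the weak sense. Then there exists a shrinking $\mathcal U^0$ of $\mathcal U$ which is an abstract good coordinate system of $Z$ in the strong sense.
   Context: An abstract K-chart of $X$ is a triple $(U,S,\psi)$ where $U$ is a locally compact separable metrizable space, $S\subseteq U$ is closed, and $\psi:S\to X$ is a homeomorphism onto an open subset of $X$. Given abstract K-charts $\mathcal U_i=(U_i,S_i,\psi_i)$ ($i=1,2$), a coordinate change from $\mathcal U_1$ to $\mathcal U_2$ is a pair $(U_{21},\varphi_{21})$ with: (1) $U_{21}\subseteq U_1$ open; (2) $\varphi_{21}:U_{21}\to U_2$ a topological embedding; (3) $S_1\cap U_{21}=\varphi_{21}^{-1}(S_2)$ and $\psi_2\circ\varphi_{21}=\psi_1$ on $S_1\cap U_{21}$; (4) $\psi_1(S_1\cap U_{21})=\psi_1(S_1)\cap\psi_2(S_2)$. An abstract good coordinate system of $Z$ in the weak sense is $(\mathfrak P,\{\mathcal U_{\mathfrak p}\},\{\Phi_{\mathfrak p\mathfrak q}\})$ where: (1) $\mathfrak P$ is a finite partially ordered set; (2) each $\mathcal U_{\mathfrak p}=(U_{\mathfrak p},S_{\mathfrak p},\psi_{\mathfrak p})$ is an abstract K-chart; (3) for $\mathfrak q\le\mathfrak p$, $\Phi_{\mathfrak p\mathfrak q}=(U_{\mathfrak p\mathfrak q},\varphi_{\mathfrak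 p\mathfrak q})$ is a coordinate change from $\mathcal U_{\mathfrak q}$ to $\mathcal U_{\mathfrak p}$, with $U_{\mathfrak p\mathfrak p}=U_{\mathfrak p}$ and $\varphi_{\mathfrak p\mathfrak p}=\mathrm{id}$; (4) if $\mathfrak r\le\mathfrak q\le\mathfrak p$ then $\varphi_{\mathfrak p\mathfrak r}=\varphi_{\mathfrak p\mathfrak q}\circ\varphi_{\mathfrak q\mathfrak r}$ on $\varphi_{\mathfrak q\mathfrak r}^{-1}(U_{\mathfrak p\mathfrak q})\cap U_{\mathfrak p\mathfrak r}$; (5) if $\psi_{\mathfrak p}(S_{\mathfrak p})\cap\psi_{\mathfrak q}(S_{\mathfrak q})\neq\emptyset$ then $\mathfrak p\le\mathfrak q$ or $\mathfrak q\le\mathfrak p$; (6) $\bigcup_{\mathfrak p}\psi_{\mathfrak p}(S_{\mathfrak p})\supseteq Z$. On $\coprod_{\mathfrak p}U_{\mathfrak p}$ define a relation $\sim$: for $x\in U_{\mathfrak p}$, $y\in U_{\mathfrak q}$, $x\sim y$ iff (a) $\mathfrak p=\mathfrak q$ and $x=y$, or (b) $\mathfrak p\le\mathfrak q$, $x\in U_{\mathfrak q\mathfrak p}$ and $y=\varphi_{\mathfrak q\mathfrak p}(x)$, or (c) $\mathfrak q\le\mathfrak p$, $y\in U_{\mathfrak p\mathfrak q}$ and $x=\varphi_{\mathfrak p\mathfrak q}(y)$. The system is an abstract good coordinate system of $Z$ in the strong sense if it is one in the weak sense and moreover (7) $\sim$ is an equivalence relation and (8) the quotient $(\coprod_{\mathfrak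 p}U_{\mathfrak p})/\sim$ with the quotient topology is Hausdorff. For an open subset $V$ of a separable metrizable space $U$, write $V\Subset U$ ($V$ is a shrinking of $U$) if the closure of $V$ in $U$ is compact. For an abstract K-chart $\mathcal U=(U,S,\psi)$ and open $U_0\subseteq U$, $\mathcal U|_{U_0}=(U_0,S\cap U_0,\psi|_{S\cap U_0})$; it is a shrinking of $\mathcal U$ if $U_0\Subset U$. An abstract good coordinate system $\mathcal U^0=(\mathfrak P,\{\mathcal U^0_{\mathfrak p}\},\{\Phi^0_{\mathfrak p\mathfrak q}\})$ of $Z$ in the weak sense (same $\mathfrak P$) is a shrinking of $\mathcal U$ if each $\mathcal U^0_{\mathfrak p}$ is a shrinking of $\mathcal U_{\mathfrak p}$, and for $\mathfrak q\le\mathfrak p$ the domain of $\Phi^0_{\mathfrak p\mathfrak q}$ is a shrinking ($\Subset$) of the domain $U_{\mathfrak p\mathfrak q}$ of $\Phi_{\mathfrak p\mathfrak q}$ and $\varphi^0_{\mathfrak p\mathfrak q}$ is the restriction of $\varphi_{\mathfrak p\mathfrak q}$. *)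

From mathcomp Require Import all_boot all_order all_algebra.
From mathcomp Require Import all_classical all_reals all_analysis.
Set Implicit Arguments. Unset Strict Implicit. Unset Printing Implicit Defensive.
Import Order.TTheory GRing.Theory Num.Theory.
Local Open Scope classical_set_scope.

(* D is locally compact as a subspace: each point of D has a compact
   neighbourhood in D. (Compactness in the subspace = compactness in T
   of a subset of D.) *)
Definition sub_locally_compact (T : topologicalType) (D : set T) : Prop :=
  forall x, D x -> exists K : set T, exists O : set T,
    [/\ K `<=` D, compact K, open O, O x & D `&` O `<=` K].

Definition sub_separable (T : topologicalType) (D : set T) : Prop :=
  exists C : set T, [/\ countable C, C `<=` D & D `<=` closure C].

Definition rel_open (T : topologicalType) (D A : set T) : Prop :=
  exists O : set T, open O /\ A = D `&` O.

Definition rel_closed (T : topologicalType) (D A : set T) : Prop :=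
  exists C : set T, closed C /\ A = D `&` C.

Definition embedding_on (T T' : topologicalType) (f : T -> T') (D : set T)
  : Prop :=
  [/\ {in D &, injective f},
      {within D, continuous f} &
      forall O : set T, open O ->
        exists O' : set T', open O' /\ f @` (D `&` O) = f @` D `&` O'].

(* Abstract K-chart (U, S, psi) of X.  The space U is represented as a
   subset D of an ambient space T (a metric space, so U is metrizable);
   S is a subset of T, psi : T -> X is only relevant on S. *)
Definition KChart (T : topologicalType) (X : topologicalType)
  (D : set T) (S : set T) (psi : T -> X) : Prop :=
  [/\ sub_locally_compact D, sub_separable D,
      (S `<=` D /\ rel_closed D S),
      embedding_on psi S & open (psi @` S)].

Definition coord_change (T1 T2 X : topologicalType)
  (D1 S1 : set T1) (psi1 : T1 -> X) (D2 S2 : set T2) (psi2 : T2 -> X)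
  (W : set T1) (phi : T1 -> T2) : Prop :=
  [/\ (W `<=` D1 /\ rel_open D1 W),
      (phi @` W `<=` D2 /\ embedding_on phi W),
      (S1 `&` W = W `&` phi @^-1` S2 /\
       forall x, S1 x -> W x -> psi2 (phi x) = psi1 x) &
      psi1 @` (S1 `&` W) = psi1 @` S1 `&` psi2 @` S2].

Section GCS.
Local Unset Implicit Arguments.
Context (R : realType) (dP : Order.disp_t) (P : finPOrderType dP)
  (T : P -> pseudoMetricType R) (X : pseudoMetricType R) (Z : set X)
  (D : forall p, set (T p)) (S : forall p, set (T p))
  (psi : forall p, T p -> X)
  (W : forall p q : P, set (T q)) (phi : forall p q : P, T q -> T p).

Definition gcs_weak : Prop :=
  [/\ (forall p : P, KChart (D p) (S p) (psi p)),
      (forall p q : P, (q <= p)%O ->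
         coord_change (D q) (S q) (psi q) (D p) (S p) (psi p)
                      (W p q) (phi p q)),
      (forall p : P, W p p = D p /\ forall x, D p x -> phi p p x = x),
      (forall p q r : P, (r <= q)%O -> (q <= p)%O ->
         forall x, W q r x -> W p q (phi q r x) -> W p r x ->
           phi p r x = phi p q (phi q r x)) &
      ((forall p q : P, psi p @` S p `&` psi q @` S q !=set0 ->
         (p <= q)%O \/ (q <= p)%O) /\
      Z `<=` [set z | exists p : P, (psi p @` S p) z])].

Definition in_union (x : {p : P & T p}) : Prop := D (projT1 x) (projT2 x).

Definition gcs_rel (x y : {p : P & T p}) : Prop :=
  x = y \/
  ((projT1 x <= projT1 y)%O /\ W (projT1 y) (projT1 x) (projT2 x) /\
     projT2 y = phi (projT1 y) (projT1 x) (projT2 x)) \/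
  ((projT1 y <= projT1 x)%O /\ W (projT1 x) (projT1 y) (projT2 y) /\
     projT2 x = phi (projT1 x) (projT1 y) (projT2 y)).

Definition union_open (A : set {p : P & T p}) : Prop :=
  A `<=` in_union /\
  forall p, rel_open (D p) [set u | A (existT _ p u)].

Definition saturated (A : set {p : P & T p}) : Prop :=
  forall a b, in_union a -> in_union b -> A a -> gcs_rel a b -> A b.

(* (7): ~ is an equivalence relation on the disjoint union (reflexivity
   and symmetry hold by definition). *)
Definition gcs_equiv : Prop :=
  forall x y z, in_union x -> in_union y -> in_union z ->
    gcs_rel x y -> gcs_rel y z -> gcs_rel x z.

(* (8): the quotient is Hausdorff: distinct classes are separated by
   disjoint open sets of the quotient, i.e. by disjoint saturated open
   subsets of the disjoint union (open sets of the quotient topology are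
   exactly the images of saturated open sets). *)
Definition gcs_quotient_hausdorff : Prop :=
  forall x y, in_union x -> in_union y -> ~ gcs_rel x y ->
    exists A B : set {p : P & T p},
      [/\ (union_open A /\ saturated A), (union_open B /\ saturated B),
          A x, B y & A `&` B = set0].

Definition gcs_strong : Prop :=
  [/\ gcs_weak, gcs_equiv & gcs_quotient_hausdorff].

End GCS.
Arguments gcs_weak {R dP P T X} Z D S psi W phi.
Arguments in_union {R dP P T} D x.
Arguments gcs_rel {R dP P T} W phi x y.
Arguments union_open {R dP P T} D A.
Arguments saturated {R dP P T} D W phi A.
Arguments gcs_equiv {R dP P T} D W phi.
Arguments gcs_quotient_hausdorff {R dP P T} D W phi.
Arguments gcs_strong {R dP P T X} Z D S psi W phi.

(* V is a shrinking of the subspace U: V open in U and the closure of V in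
   U (= closure V `&` U) is compact. *)
Definition shrinking_of (T : topologicalType) (V U : set T) : Prop :=
  [/\ V `<=` U, rel_open U V & compact (closure V `&` U)].

From mathcomp Require Import all_boot all_order all_algebra.
From mathcomp Require Import all_classical all_reals all_analysis.
From mathcomp Require Import lra.
Set Implicit Arguments. Unset Strict Implicit. Unset Printing Implicit Defensive.
Import Order.TTheory GRing.Theory Num.Theory.
Local Open Scope classical_set_scope.
Local Open Scope ring_scope.

(* Shrink every chart to a small neighbourhood of a compact set C_p in S_p, the
   images of the C_p still covering Z, and every coordinate change to an open
   neighbourhood G_pq of the compact overlap C_q /\ psi_q^-1(psi_p(C_p)) whose
   closure lies in the old domain.  Each way in which the shrunk system could
   fail to be strong at radius 1/(n+1) around the C_p is ruled out for large n
   by compactness: a sequence of counterexamples with shrinking radii has a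
   cluster point over the C_p, where the overlap lies in the open set G_pq and
   nothing fails.  For such n the relation is even transitive on the compact
   closures of the shrunk charts; there saturations of closed sets are closed,
   and two inequivalent points are separated by separating their compact
   saturations chart by chart. *)

Section Topology.
Context {T U : topologicalType}.

Lemma within_continuous_nbhs (f : T -> U) (A : set T) (B : set U) x :
  {within A, continuous f} -> A x -> nbhs (f x) B ->
  nbhs x [set z | A z -> B (f z)].
Proof. by move=> /subspace_continuousP cf Ax nB; exact: cf x Ax _ nB. Qed.

Lemma within_open_continuous_at (f : T -> U) (A : set T) x :
  open A -> {within A, continuous f} -> A x -> {for x, continuous f}.
Proof.
by move=> oA; rewrite (continuous_open_subspace f oA) => cf Ax; apply: cf; rewrite inE.
Qed.

Lemma compact_setI_preimage (f : T -> U) (A D : set T) (B : set U) :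
  compact A -> A `<=` D -> {within D, continuous f} -> closed B ->
  compact (A `&` f @^-1` B).
Proof.
move=> cA AD cf cB.
suff -> : A `&` f @^-1` B = A `&` closure (A `&` f @^-1` B).
  by apply: compact_closedI => //; exact: closed_closure.
apply/seteqP; split => x [Ax Bx]; split => //; first exact: subset_closure.
apply: contrapT => nBx.
have nC : nbhs (f x) (~` B) by apply: open_nbhs_nbhs; split => //; exact: closed_openC.
have /Bx [z [[Az Bz] Cz]] := within_continuous_nbhs cf (AD _ Ax) nC.
exact: Cz (AD _ Az) Bz.
Qed.

Lemma embedding_on_setI (f : T -> U) (D V : set T) :
  embedding_on f D -> open V -> embedding_on f (D `&` V).
Proof.
case=> inj cf om oV; split.
- by move=> x y /set_mem [Dx _] /set_mem [Dy _]; apply: inj; exact: mem_set.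
- exact: continuous_subspaceW cf.
- move=> A oA; have [B' [oB' e]] := om (A `&` V) (openI oA oV).
  exists B'; split => //; apply/seteqP; split.
  + move=> _ [x [[Dx Vx] Ax] <-]; split; first by exists x.
    have : (f @` (D `&` (A `&` V))) (f x) by exists x.
    by rewrite e => -[].
  + move=> _ [[x [Dx Vx] <-] B'x].
    have : (f @` D `&` B') (f x) by split => //; exists x.
    by rewrite -e => -[x' [Dx' [Ax' Vx']] <-]; exists x'.
Qed.

Lemma sub_separable_open (A : set T) :
  sub_separable (@setT T) -> open A -> sub_separable A.
Proof.
case=> C [cC _ dC] oA; exists (C `&` A); split.
- by apply: sub_countable cC; apply: subset_card_le => x [].
- by move=> x [].
- move=> x Ax B nB.
  have nBA : nbhs x (B `&` A) by apply: filterI => //; exact: open_nbhs_nbhs.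
  by have [c [Cc [Bc Ac]]] := dC x I _ nBA; exists c.
Qed.

Lemma compact_finite_subcover (I : choiceType) (K : set T) (f : I -> set T) :
  compact K -> (forall i, open (f i)) -> K `<=` \bigcup_i f i ->
  exists s : seq I, K `<=` \bigcup_(i in [set` s]) f i.
Proof.
move=> /compact_near_coveringP cK oF cov.
pose F := filter_from [set: seq I] (fun s0 => [set s : seq I | {subset s0 <= s}]).
have FF : Filter F.
  apply: filter_from_filter; first by exists [::].
  move=> s0 s1 _ _; exists (s0 ++ s1) => // s sub.
  by split => i si; apply: sub; rewrite mem_cat si ?orbT.
have [|s0 _ s0cov] := cK (seq I) F (fun s x => exists2 i, i \in s & f i x) FF.
  move=> x /cov [i _ fx]; exists (f i, [set s : seq I | i \in s]).
  - split => /=; first by apply: open_nbhs_nbhs; split.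
    by exists [:: i] => // s; apply; rewrite mem_head.
  - by move=> [y s] /= [fiy si]; exists i.
exists s0 => x Kx; have [i si fx] := s0cov s0 (fun i => id) x Kx.
by exists i.
Qed.

End Topology.

Lemma choice_dep (I : Type) (A : I -> Type) (Q : forall i, A i -> Prop) :
  (forall i, exists a, Q i a) -> exists f : forall i, A i, forall i, Q i (f i).
Proof.
by move=> H; exists (fun i => projT1 (cid (H i))) => i; exact: projT2 (cid (H i)).
Qed.

Lemma near_oo_upclosed (Q : nat -> Prop) :
  (forall n m, (n <= m)%N -> Q n -> Q m) -> (exists n, Q n) ->
  \forall n \near \oo, Q n.
Proof. by move=> QS [n Qn]; exists n => // m /= nm; exact: QS Qn. Qed.

Section ClusterPoints.
Context {Y : topologicalType}.
Implicit Types (s : nat -> Y) (y : Y).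

Lemma cluster_seq_nbhs s y A N :
  cluster (s @ \oo) y -> nbhs y A -> exists2 n, (N <= n)%N & A (s n).
Proof.
move=> sy nA.
have [_ [[n Nn <-] An]] := sy (s @` [set n | (N <= n)%N]) A
  (filterS (fun n Nn => ex_intro2 _ _ n Nn erefl) (nbhs_infty_ge N)) nA.
by exists n.
Qed.

Lemma cluster_seq_open s y (A : set Y) :
  cluster (s @ \oo) y -> open A -> A y -> exists n, A (s n).
Proof.
move=> sy oA Ay; have [n _ An] := cluster_seq_nbhs 0 sy (open_nbhs_nbhs (conj oA Ay)).
by exists n.
Qed.

Lemma compact_cluster_seq (K : set Y) s :
  compact K -> (forall n, K (s n)) -> exists2 y, K y & cluster (s @ \oo) y.
Proof.
move=> cK Ks; have [y [Ky sy]] := cK (s @ \oo) _ (nearW (F := \oo) _ Ks).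
by exists y.
Qed.

Lemma cluster_seq_comp {U : topologicalType} (g : Y -> U) s y :
  cluster (s @ \oo) y -> {for y, continuous g} ->
  cluster ((g \o s) @ \oo) (g y).
Proof.
move=> sy cg B A sB nA.
by have [z [Bz Az]] := sy (g @^-1` B) (g @^-1` A) sB (cg _ nA); exists (g z).
Qed.

Lemma cluster_seq_closed s y (F : set Y) :
  cluster (s @ \oo) y -> closed F -> (forall n, F (s n)) -> F y.
Proof.
move=> sy cF Fs; rewrite (closure_id F).1 // => B nB.
by have [n _ Bn] := cluster_seq_nbhs 0 sy nB; exists (s n).
Qed.

Lemma compact_eventually (K : set Y) (H : nat -> set Y) (Q : set Y) :
  compact K -> (forall n, H n `<=` K) ->
  (forall s y, (forall n, H n (s n) /\ ~ Q (s n)) -> cluster (s @ \oo) y -> False) ->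
  exists n, forall x, H n x -> Q x.
Proof.
move=> cK HK noclu; apply: contrapT => /forallNP nH.
have /choice [s Hs] : forall n, exists x, H n x /\ ~ Q x.
  by move=> n; have /existsNP [x /not_implyP HQ] := nH n; exists x.
have [y _ sy] := compact_cluster_seq cK (fun n => HK n _ (Hs n).1).
exact: noclu Hs sy.
Qed.

End ClusterPoints.

Lemma cluster_seq_eq_within {Y Y' U : topologicalType} (f : Y -> U) (g : Y' -> U)
    (D : set Y) (D' : set Y') (s : nat -> Y * Y') (y : Y * Y') :
  hausdorff_space U -> cluster (s @ \oo) y ->
  {within D, continuous f} -> {within D', continuous g} -> D y.1 -> D' y.2 ->
  (forall n, [/\ D (s n).1, D' (s n).2 & f (s n).1 = g (s n).2]) -> f y.1 = g y.2.
Proof.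
move=> hU sy cf cg Dy D'y fg; apply: hU => A B nA nB.
have nAB : nbhs y ([set z | D z -> A (f z)] `*` [set z | D' z -> B (g z)]).
  exists ([set z | D z -> A (f z)], [set z | D' z -> B (g z)]) => //.
  by split; exact: within_continuous_nbhs.
have [n _ [/= An Bn]] := cluster_seq_nbhs 0 sy nAB.
have [Dn D'n e] := fg n.
by exists (f (s n).1); split; [exact: An|rewrite e; exact: Bn].
Qed.

Lemma cluster_seq_pair {Y Y' : topologicalType} (s : nat -> Y * Y') (y : Y * Y') :
  cluster (s @ \oo) y ->
  cluster ((fst \o s) @ \oo) y.1 /\ cluster ((snd \o s) @ \oo) y.2.
Proof.
by move=> sy; split; apply: cluster_seq_comp => //; [exact: cvg_fst|exact: cvg_snd].
Qed.

Lemma coord_change_restrict (T1 T2 X : topologicalType) (S1 : set T1)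
    (psi1 : T1 -> X) (S2 : set T2) (psi2 : T2 -> X) (W : set T1) (f : T1 -> T2)
    (U1 : set T1) (U2 : set T2) (W' : set T1) :
  coord_change setT S1 psi1 setT S2 psi2 W f ->
  open W' -> W' `<=` U1 `&` W `&` f @^-1` U2 ->
  (forall x y, S1 x -> U1 x -> S2 y -> U2 y -> psi1 x = psi2 y -> W' x) ->
  coord_change U1 (S1 `&` U1) psi1 U2 (S2 `&` U2) psi2 W' f.
Proof.
case=> [[_ _] [_ emb] [SW cmp] img] oW' sub overlap.
have W'W : W' `<=` W by move=> x /sub [[]].
have S2f x : S1 x -> W' x -> S2 (f x).
  by move=> S1x /W'W Wx; have : (S1 `&` W) x by []; rewrite SW => -[].
split.
- split; first by move=> x /sub [[]].
  exists W'; split => //; apply/seteqP; split => x; last by case.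
  by move=> W'x; split => //; case: (sub x W'x) => -[].
- split; first by move=> _ [x /sub [_ ?] <-].
  by rewrite -(setIidr W'W); exact: embedding_on_setI.
- split; last by move=> x [S1x _] /W'W; exact: cmp.
  apply/seteqP; split => x.
  + move=> [[S1x U1x] W'x]; split => //; split; first exact: S2f.
    by case: (sub x W'x).
  + move=> [W'x [S2fx U2fx]]; split => //; split; last by case: (sub x W'x) => -[].
    have : (W `&` f @^-1` S2) x by split => //; exact: W'W.
    by rewrite -SW => -[].
- apply/seteqP; split.
  + move=> _ [x [[S1x U1x] W'x] <-]; split; first by exists x.
    exists (f x); last exact: cmp (W'W _ W'x).
    by split; [exact: S2f|case: (sub x W'x)].
  + move=> _ [[x [S1x U1x] <-] [y [S2y U2y] e]].
    by exists x => //; split => //; apply: (overlap x y) => //; rewrite e.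
Qed.

Section LocallyCompactMetric.
Context {R : realType} {T : pseudoMetricType R}.
Hypotheses (hT : hausdorff_space T) (lcT : sub_locally_compact (@setT T)).

Lemma closure_ball_subset (x : T) (r : R) :
  0 < r -> closure (ball x r) `<=` ball x (r + r).
Proof.
move=> r0 y cy; have [z [bxz byz]] := cy _ (nbhsx_ballx y r r0).
by apply: (ball_triangle bxz); apply: ball_sym.
Qed.

Lemma compact_closure_nbhs (L W : set T) : compact L -> open W -> L `<=` W ->
  exists G, [/\ open G, L `<=` G, closure G `<=` W & compact (closure G)].
Proof.
move=> cL oW LW.
have /choice [N NP] : forall x, exists N : set T,
    [/\ open N, closure N `<=` W, compact (closure N) & L x -> N x].
  move=> x; have [Lx|nLx] := pselect (L x); last first.
    exists set0; rewrite closure0; split => //; [exact: open0|exact: compact0].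
  have [K [V [_ cK oV Vx VK]]] := @lcT x I.
  have nW : nbhs x W by apply: open_nbhs_nbhs; split => //; exact: LW.
  have [d dW] := nbhs_ex nW.
  have e0 : 0 < d%:num / 2 by rewrite divr_gt0.
  exists (V `&` (ball x (d%:num / 2))°); split.
  - by apply: openI => //; exact: open_interior.
  - move=> y /(closureS (@subIsetr _ _ _)) /(closureS (@interior_subset _ _)).
    by move=> /(closure_ball_subset e0); rewrite -splitr => /dW.
  - apply: (subclosed_compact (@closed_closure _ _) cK).
    rewrite [X in _ `<=` X](closure_id K).1; last exact: compact_closed.
    by apply: closureS => y [Vy _]; exact: VK.
  - by split => //; exact: nbhsx_ballx.
have [s Ls] : exists s : seq T, L `<=` \bigcup_(x in [set` s]) N x.
  apply: compact_finite_subcover cL _ _ => [x|x Lx]; first by case: (NP x).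
  by exists x => //; case: (NP x) => _ _ _; apply.
pose Gc := \bigcup_(x in [set` s]) closure (N x).
have cGc : compact Gc.
  by rewrite /Gc bigcup_seq; apply: bigsetU_compact => x _; case: (NP x).
have GGc : closure (\bigcup_(x in [set` s]) N x) `<=` Gc.
  rewrite [X in _ `<=` X](closure_id Gc).1; last exact: compact_closed.
  by apply: closureS => y [x sx Ny]; exists x => //; exact: subset_closure.
exists (\bigcup_(x in [set` s]) N x); split => //.
- by apply: bigcup_open => x _; case: (NP x).
- by move=> y /GGc [x _]; case: (NP x) => _ + _ _; apply.
- exact: subclosed_compact (@closed_closure _ _) cGc GGc.
Qed.

Lemma sub_locally_compact_open (A : set T) : open A -> sub_locally_compact A.
Proof.
move=> oA x Ax.
have xA : [set x] `<=` A by move=> _ ->.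
have [G [oG xG GA cG]] := compact_closure_nbhs (@compact_set1 _ x) oA xA.
exists (closure G), G; split => //; first exact: xG.
by move=> y [_ Gy]; exact: subset_closure.
Qed.

Lemma compact_disjoint_separation (A B : set T) :
  compact A -> compact B -> A `&` B = set0 ->
  exists VA VB, [/\ open VA, open VB, A `<=` VA, B `<=` VB & VA `&` VB = set0].
Proof.
move=> cA cB AB.
have [G [oG AG _ cG]] := compact_closure_nbhs cA openT (@subsetT _ A).
have AGi : A `<=` (closure G)°.
  move=> x /AG Gx; apply: (@filterS _ _ _ G); first exact: subset_closure.
  exact: open_nbhs_nbhs.
have nB : set_nbhs A (~` B).
  apply/set_nbhsP; exists (~` B); split => //.
  - exact: closed_openC (compact_closed hT cB).
  - by move=> x Ax Bx; have : (A `&` B) x by []; rewrite AB.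
have [V /set_nbhsP [V1 [oV1 AV1 V1V]] clV] :=
  compact_normal_local hT cG AGi (compact_closed hT cA) nB.
exists V1, (~` closure V); split => //.
- exact: closed_openC (@closed_closure _ _).
- by move=> x Bx clx; have := clV _ clx.
- apply/seteqP; split => // x [V1x]; apply; apply: subset_closure; exact: V1V.
Qed.

End LocallyCompactMetric.

Lemma cluster_seq_closure {R : realType} {T : pseudoMetricType R} (s : nat -> T) x
    (C : set T) :
  cluster (s @ \oo) x ->
  (forall n, closure (\bigcup_(c in C) ball c n.+1%:R^-1) (s n)) -> closure C x.
Proof.
move=> sx sC B nB; have [d dB] := nbhs_ex nB.
have e0 : 0 < d%:num / 3 by rewrite divr_gt0.
have [N _ NP] := near_infty_natSinv_lt (PosNum e0).
have [n Nn bn] := cluster_seq_nbhs N sx (nbhsx_ballx x _ e0).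
have [u [[c Cc bcu] bnu]] := sC n _ (nbhsx_ballx (s n) _ e0).
exists c; split => //; apply: dB.
apply: le_ball (ball_triangle (ball_triangle bn bnu) (ball_sym bcu)).
move: (NP n Nn) => /=; set r := n.+1%:R^-1; set e := d%:num; lra.
Qed.

Section GoodCoordinateSystem.
Local Unset Implicit Arguments.
Context (R : realType) (dP : Order.disp_t) (P : finPOrderType dP)
  (T : P -> pseudoMetricType R) (X : pseudoMetricType R) (Z : set X)
  (S : forall p, set (T p)) (psi : forall p, T p -> X)
  (W : forall p q : P, set (T q)) (phi : forall p q : P, T q -> T p).
Hypotheses (hX : hausdorff_space X) (hT : forall p, hausdorff_space (T p))
  (cZ : compact Z) (gw : gcs_weak Z (fun p => @setT (T p)) S psi W phi).
Local Set Implicit Arguments.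

Lemma chartP (p : P) : KChart (@setT (T p)) (S p) (psi p).
Proof. by case: gw. Qed.

Lemma changeP {p q : P} : (q <= p)%O ->
  coord_change setT (S q) (psi q) setT (S p) (psi p) (W p q) (phi p q).
Proof. by case: gw => _ H _ _ _; exact: H. Qed.

Lemma W_id p : W p p = setT.
Proof. by case: gw => _ _ H _ _; case: (H p). Qed.

Lemma phi_id p x : phi p p x = x.
Proof. by case: gw => _ _ H _ _; case: (H p) => _; apply. Qed.

Lemma phi_comp {p q r : P} : (r <= q)%O -> (q <= p)%O ->
  forall x, W q r x -> W p q (phi q r x) -> W p r x ->
    phi p r x = phi p q (phi q r x).
Proof. by case: gw => _ _ _ H _; exact: H. Qed.

Lemma chart_images_comparable p q :
  psi p @` S p `&` psi q @` S q !=set0 -> (p <= q)%O \/ (q <= p)%O.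
Proof. by case: gw => _ _ _ _ [H _]; exact: H. Qed.

Lemma Z_covered : Z `<=` [set z | exists p : P, (psi p @` S p) z].
Proof. by case: gw => _ _ _ _ [_ H]. Qed.

Lemma chart_locally_compact p : sub_locally_compact (@setT (T p)).
Proof. by case: (chartP p). Qed.
Arguments chart_locally_compact : clear implicits.

Lemma closed_S p : closed (S p).
Proof. by case: (chartP p) => _ _ [_ [C [cC ->]]] _ _; rewrite setTI. Qed.

Lemma psi_inj {p : P} : {in S p &, injective (psi p)}.
Proof. by case: (chartP p) => _ _ _ []. Qed.

Lemma psi_cont {p : P} : {within S p, continuous (psi p)}.
Proof. by case: (chartP p) => _ _ _ []. Qed.

Section ChangePair.
Context {p q : P}.
Hypothesis qp : (q <= p)%O.

Lemma open_W : open (W p q).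
Proof. by case: (changeP qp) => -[_ [V [oV ->]]] _ _ _; rewrite setTI. Qed.

Lemma phi_inj : {in W p q &, injective (phi p q)}.
Proof. by case: (changeP qp) => _ [_ []]. Qed.

Lemma phi_cont_at x : W p q x -> {for x, continuous (phi p q)}.
Proof.
apply: within_open_continuous_at open_W _.
by case: (changeP qp) => _ [_ []].
Qed.

Lemma phi_within_cont : {within W p q, continuous (phi p q)}.
Proof. by case: (changeP qp) => _ [_ []]. Qed.

Lemma psi_phi x : S q x -> W p q x -> psi p (phi p q x) = psi q x.
Proof. by case: (changeP qp) => _ _ [_ H] _; exact: H. Qed.

Lemma phi_S x : S q x -> W p q x -> S p (phi p q x).
Proof.
move=> Sx Wx; case: (changeP qp) => _ _ [SW _] _.
by have : (S q `&` W p q) x by []; rewrite SW => -[].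
Qed.

Lemma W_of_psi_eq x y : S q x -> S p y -> psi q x = psi p y -> W p q x.
Proof.
move=> Sx Sy e; case: (changeP qp) => _ _ _ img.
have : (psi q @` (S q `&` W p q)) (psi q x).
  by rewrite img; split; [exists x|exists y].
by case=> x' [Sx' Wx'] /(psi_inj (mem_set Sx') (mem_set Sx)) <-.
Qed.

Lemma phi_eq_of_psi_eq x y : S q x -> S p y -> psi q x = psi p y -> phi p q x = y.
Proof.
move=> Sx Sy e; have Wx := W_of_psi_eq Sx Sy e.
by apply: (psi_inj (mem_set (phi_S Sx Wx)) (mem_set Sy)); rewrite psi_phi.
Qed.

End ChangePair.

Lemma chart_image_compact_nbhs p s : S p s -> exists (A : set X) (K : set (T p)),
  [/\ open A, compact K, K `<=` S p, A `<=` psi p @` K & A (psi p s)].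
Proof.
move=> Ss; have [K [V [_ cK oV Vs VK]]] := chart_locally_compact p s I.
have [_ _ _ [_ _ /(_ _ oV) [V' [oV' eV']]] oS] := chartP p.
exists (psi p @` S p `&` V'), (K `&` S p); split.
- exact: openI.
- by apply: compact_closedI => //; exact: closed_S.
- by move=> ? [].
- move=> w Vw; have : (psi p @` S p `&` V') w by [].
  rewrite -eV' => -[t [St Vt] <-].
  by exists t => //; split => //; apply: VK.
- have : (psi p @` (S p `&` V)) (psi p s) by exists s.
  by rewrite eV' => -[].
Qed.

Lemma exists_compact_cover : exists C : forall p, set (T p),
  [/\ forall p, compact (C p), forall p, C p `<=` S p &
      Z `<=` [set z | exists p, (psi p @` C p) z]].
Proof.
have local p z : exists OK : set X * set (T p),
    [/\ open OK.1, compact OK.2, OK.2 `<=` S p, OK.1 `<=` psi p @` OK.2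
      & (psi p @` S p) z -> OK.1 z].
  have [[s Ss <-]|nz] := pselect ((psi p @` S p) z); last first.
    by exists (set0, set0); split => //; [exact: open0|exact: compact0].
  have [A [K AK]] := chart_image_compact_nbhs Ss.
  by exists (A, K); case: AK => *; split.
have [F FP] := choice_dep (fun p => choice_dep (local p)).
have [s Zs] : exists s : seq (P * X), Z `<=` \bigcup_(pz in [set` s]) (F pz.1 pz.2).1.
  apply: compact_finite_subcover cZ _ _ => [[p z]|z /Z_covered [p pz]].
    by case: (FP p z).
  by exists (p, z) => //; case: (FP p z) => _ _ _ _; apply.
exists (fun p => \bigcup_(pz in [set` s]) (F p pz.2).2); split.
- move=> p; rewrite bigcup_seq; apply: bigsetU_compact => pz _.
  by case: (FP p pz.2).
- by move=> p x [pz _]; case: (FP p pz.2) => _ _ + _ _; apply.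
- move=> z /Zs [[p z'] sz Fz]; exists p.
  have [_ _ _ + _] := FP p z'; move=> /(_ z Fz) [t Ft <-].
  by exists t => //; exists (p, z').
Qed.

Definition has_strong_shrinking : Prop :=
  exists (U0 : forall p, set (T p)) (W0 : forall p q : P, set (T q)),
    [/\ (forall p, shrinking_of (U0 p) setT),
        (forall p q : P, (q <= p)%O -> shrinking_of (W0 p q) (W p q)) &
        gcs_strong Z U0 (fun p => S p `&` U0 p) psi W0 phi].

Lemma gcs_rel_mono (W1 W2 : forall p q : P, set (T q)) x y :
  (forall p q, W1 p q `<=` W2 p q) -> gcs_rel W1 phi x y -> gcs_rel W2 phi x y.
Proof.
move=> sub [->|[[xy [Wx ey]]|[yx [Wy ex]]]]; first by left.
- by right; left; split => //; split => //; exact: sub.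
- by right; right; split => //; split => //; exact: sub.
Qed.

Lemma gcs_rel_sym (W1 : forall p q : P, set (T q)) x y :
  gcs_rel W1 phi x y -> gcs_rel W1 phi y x.
Proof. by case=> [->|[h|h]]; [left|right; right|right; left]. Qed.

Section Shrinking.
Local Unset Implicit Arguments.
Variables (C Ob : forall p, set (T p)).
Hypotheses (C_compact : forall p, compact (C p)) (C_S : forall p, C p `<=` S p)
  (Z_C : Z `<=` [set z | exists p, (psi p @` C p) z])
  (Ob_open : forall p, open (Ob p)) (C_Ob : forall p, C p `<=` Ob p)
  (Ob_compact : forall p, compact (closure (Ob p))).

Definition overlap (p q : P) : set (T q) := C q `&` psi q @^-1` (psi p @` C p).

Lemma overlap_compact (p q : P) : compact (overlap p q).
Proof.
apply: compact_setI_preimage (C_compact q) (C_S q) psi_cont _.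
apply: (compact_closed hX); apply: continuous_compact (C_compact p).
exact: continuous_subspaceW (C_S p) psi_cont.
Qed.

Lemma overlap_W {p q : P} : (q <= p)%O -> overlap p q `<=` W p q.
Proof.
by move=> qp x [Cx [y Cy e]]; exact: (W_of_psi_eq qp (C_S q x Cx) (C_S p y Cy) (esym e)).
Qed.

(* [G p p = setT] makes the shrunk domain [W0 p p] equal to the shrunk chart. *)
Lemma exists_overlap_nbhs : exists G : forall p q : P, set (T q),
  (forall p q, (q <= p)%O ->
     [/\ open (G p q), overlap p q `<=` G p q & closure (G p q) `<=` W p q]) /\
  (forall p, G p p = setT).
Proof.
have nbhs_pq (p q : P) : exists G : set (T q), (q <= p)%O ->
    [/\ open G, overlap p q `<=` G & closure G `<=` W p q].
  have [qp|nqp] := pselect (q <= p)%O; last by exists set0.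
  have [G [oG LG GW _]] := compact_closure_nbhs (hT q) (chart_locally_compact q)
    (overlap_compact p q) (open_W qp) (overlap_W qp).
  by exists G.
have [G GP] := choice_dep (fun p => choice_dep (nbhs_pq p)).
exists (fun p q => if q == p then setT else G p q).
split => [p q qp|p]; last by rewrite eqxx.
by case: eqVneq => [->|_]; [rewrite W_id; split => //; exact: openT|exact: GP].
Qed.

Section Tame.
Variable G : forall p q : P, set (T q).
Hypotheses (G_id : forall p, G p p = setT)
  (G_open : forall {p q}, (q <= p)%O -> open (G p q))
  (overlap_G : forall {p q}, (q <= p)%O -> overlap p q `<=` G p q)
  (G_W : forall {p q}, (q <= p)%O -> closure (G p q) `<=` W p q).

Definition Un (n : nat) (p : P) : set (T p) :=
  Ob p `&` \bigcup_(c in C p) (ball c n.+1%:R^-1)°.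

Definition Kn (n : nat) (p : P) : set (T p) := closure (Un n p).

Lemma Un_open n p : open (Un n p).
Proof.
by apply: openI (Ob_open p) _; apply: bigcup_open => c _; exact: open_interior.
Qed.

Lemma C_Un n p : C p `<=` Un n p.
Proof.
move=> c Cc; split; first exact: C_Ob.
by exists c => //; apply: nbhsx_ballx; rewrite invr_gt0.
Qed.

Lemma Kn_Ob {n p} : Kn n p `<=` closure (Ob p).
Proof. by apply: closureS => x []. Qed.

Lemma Kn_compact n p : compact (Kn n p).
Proof. exact: subclosed_compact (@closed_closure _ _) (Ob_compact p) Kn_Ob. Qed.

Lemma Kn_anti {n m p} : (n <= m)%N -> Kn m p `<=` Kn n p.
Proof.
move=> nm; apply: closureS => x [Obx [c Cc bx]]; split => //; exists c => //.
apply: interiorS bx; apply: le_ball.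
by rewrite lef_pV2 ?posrE ?ltr0n // ler_nat.
Qed.

Lemma cluster_Kn_C {p} {s : nat -> T p} {x} :
  cluster (s @ \oo) x -> (forall n, Kn n p (s n)) -> C p x.
Proof.
move=> sx Ks; have clC := compact_closed (hT p) (C_compact p).
rewrite (closure_id (C p)).1 //; apply: (@cluster_seq_closure _ (T p) _ _ _ sx) => n.
by apply: closureS (Ks n) => y [_ [c Cc /interior_subset b]]; exists c.
Qed.

Definition absorbs n p q := (q <= p)%O ->
  forall x, Kn n q x -> closure (G p q) x -> Kn n p (phi p q x) -> G p q x.

Lemma absorbs_near p q : \forall n \near \oo, absorbs n p q.
Proof.
apply: near_oo_upclosed.
  move=> n m nm H qp x Kx Gx Kpx.
  by apply: H => //; exact: Kn_anti nm _ _.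
have [qp|nqp] := pselect (q <= p)%O; last by exists 0%N.
suff [n Hn] : exists n, forall x,
    [/\ Kn n q x, closure (G p q) x & Kn n p (phi p q x)] -> G p q x.
  by exists n => _ x Kx Gx Kpx; exact: Hn x (And3 Kx Gx Kpx).
apply: compact_eventually (Ob_compact q) _ _ => [n x [/Kn_Ob] //|s y].
move=> /all_and2 [/all_and3 [Ks Gs Kps] nGs] sy.
have Cy : C q y := cluster_Kn_C sy Ks.
have Wy := G_W qp _ (cluster_seq_closed sy (@closed_closure _ _) Gs).
have Cpy : C p (phi p q y) := cluster_Kn_C (cluster_seq_comp sy (phi_cont_at qp Wy)) Kps.
have Ly : overlap p q y.
  by split => //; exists (phi p q y) => //; rewrite psi_phi //; exact: C_S.
have [n Gn] := cluster_seq_open sy (G_open qp) (overlap_G qp _ Ly).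
exact: nGs n Gn.
Qed.

Definition covers n p q := (q <= p)%O -> forall x y, S q x -> S p y ->
  Kn n q x -> Kn n p y -> psi q x = psi p y -> G p q x.

Lemma covers_near p q : \forall n \near \oo, covers n p q.
Proof.
apply: near_oo_upclosed.
  move=> n m nm H qp x y Sx Sy Kx Ky e.
  by apply: (H qp x y) => //; exact: Kn_anti nm _ _.
have [qp|nqp] := pselect (q <= p)%O; last by exists 0%N.
suff [n Hn] : exists n, forall xy : T q * T p,
    [/\ S q xy.1, S p xy.2, Kn n q xy.1, Kn n p xy.2 & psi q xy.1 = psi p xy.2] ->
    G p q xy.1.
  by exists n => _ x y Sx Sy Kx Ky e; exact: (Hn (x, y) (And5 Sx Sy Kx Ky e)).
apply: compact_eventually (compact_setX (Ob_compact q) (Ob_compact p)) _ _.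
  by move=> n xy [_ _ /Kn_Ob ? /Kn_Ob ?].
move=> s y /all_and2 [H nGs] sy; have [Sq Sp Kq Kp e] := all_and5 H.
have [sy1 sy2] := cluster_seq_pair sy.
have Cy1 : C q y.1 := cluster_Kn_C sy1 Kq.
have Cy2 : C p y.2 := cluster_Kn_C sy2 Kp.
have Ly : overlap p q y.1.
  split => //; exists y.2 => //.
  apply/esym; apply: (cluster_seq_eq_within hX sy psi_cont psi_cont)
    (C_S _ _ Cy1) (C_S _ _ Cy2) _ => n.
  by split; [exact: Sq|exact: Sp|exact: e].
have [n Gn] := cluster_seq_open sy1 (G_open qp) (overlap_G qp _ Ly).
exact: nGs n Gn.
Qed.

Definition composes n a b c := (a <= b)%O -> (b <= c)%O -> forall x,
  Kn n a x -> closure (G b a) x -> Kn n b (phi b a x) ->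
  closure (G c b) (phi b a x) -> Kn n c (phi c b (phi b a x)) -> G c a x.

Lemma composes_near a b c : \forall n \near \oo, composes n a b c.
Proof.
apply: near_oo_upclosed.
  move=> n m nm H ab bc x Kx Gx Kbx Gbx Kcx.
  by apply: (H ab bc x) => //; exact: Kn_anti nm _ _.
have [[ab bc]|nabc] := pselect ((a <= b)%O /\ (b <= c)%O); last first.
  by exists 0%N => ab bc; case: nabc.
have ac := le_trans ab bc.
suff [n Hn] : exists n, forall x,
    [/\ Kn n a x, closure (G b a) x, Kn n b (phi b a x),
        closure (G c b) (phi b a x) & Kn n c (phi c b (phi b a x))] -> G c a x.
  by exists n => _ _ x Kx Gx Kbx Gbx Kcx; exact: Hn x (And5 Kx Gx Kbx Gbx Kcx).
apply: compact_eventually (Ob_compact a) _ _ => [n x [/Kn_Ob] //|s y].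
move=> /all_and2 [/all_and5 [Ks Gs Kbs Gbs Kcs] nGs] sy.
have Cy : C a y := cluster_Kn_C sy Ks.
have Wy := G_W ab _ (cluster_seq_closed sy (@closed_closure _ _) Gs).
have sy1 := cluster_seq_comp sy (phi_cont_at ab Wy).
have Cy1 : C b (phi b a y) := cluster_Kn_C sy1 Kbs.
have Wy1 := G_W bc _ (cluster_seq_closed sy1 (@closed_closure _ _) Gbs).
have sy2 := cluster_seq_comp sy1 (phi_cont_at bc Wy1).
have Cy2 : C c (phi c b (phi b a y)) := cluster_Kn_C sy2 Kcs.
have Ly : overlap c a y.
  split => //; exists (phi c b (phi b a y)) => //.
  by rewrite psi_phi ?psi_phi //; exact: C_S.
have [n Gn] := cluster_seq_open sy (G_open ac) (overlap_G ac _ Ly).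
exact: nGs n Gn.
Qed.

Lemma G_sub_W {p q} : (q <= p)%O -> G p q `<=` W p q.
Proof. by move=> qp x Gx; apply: G_W qp _ (subset_closure Gx). Qed.

Lemma overlap_G_nbhs {a c} {x : T a} {V : set (T c)} : (a <= c)%O ->
  overlap c a x -> open V -> V (phi c a x) -> nbhs x (G c a `&` phi c a @^-1` V).
Proof.
move=> ac Lx oV Vx; apply: filterI.
  by apply: open_nbhs_nbhs; split; [exact: G_open|exact: overlap_G].
apply: (phi_cont_at ac (overlap_W ac _ Lx)).
by apply: open_nbhs_nbhs; split.
Qed.

Lemma phi_factor {a b c} {x : T a} {z : T c} : (a <= c)%O -> (c <= b)%O ->
  G c a x -> W b a x -> W b c z -> W b c (phi c a x) ->
  phi b a x = phi b c z -> phi c a x = z.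
Proof.
move=> ac cb Gx Wx Wz Wcx e; apply: (phi_inj cb (mem_set Wcx) (mem_set Wz)).
by rewrite -e (phi_comp ac cb) //; exact: G_sub_W.
Qed.

Lemma cluster_seq_factor {a b c} {s : nat -> T a} {t : nat -> T c} {x z} :
  (a <= c)%O -> (a <= b)%O -> (c <= b)%O -> cluster (s @ \oo) x ->
  overlap c a x -> phi c a x = z -> W b c z ->
  (forall n, [/\ closure (G b a) (s n), closure (G b c) (t n)
               & phi b a (s n) = phi b c (t n)]) ->
  exists n, G c a (s n) /\ phi c a (s n) = t n.
Proof.
move=> ac ab cb sx Lx exz Wz st.
have [n _ [Gn Wn]] := cluster_seq_nbhs 0 sx
  (overlap_G_nbhs ac Lx (open_W cb) (eq_ind_r _ Wz exz)).
have [Gs Gt e] := st n; exists n; split => //.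
by apply: (phi_factor ac cb) => //; [exact: G_W ab _ Gs|exact: G_W cb _ Gt].
Qed.

Definition meets_below n a b c := (a <= b)%O -> (c <= b)%O -> forall x z,
  Kn n a x -> closure (G b a) x -> Kn n c z -> closure (G b c) z ->
  phi b a x = phi b c z ->
  ((a <= c)%O /\ G c a x /\ phi c a x = z) \/
  ((c <= a)%O /\ G a c z /\ phi a c z = x).

Lemma meets_below_near a b c : \forall n \near \oo, meets_below n a b c.
Proof.
apply: near_oo_upclosed.
  move=> n m nm H ab cb x z Kx Gx Kz Gz e.
  by apply: (H ab cb x z) => //; exact: Kn_anti nm _ _.
have [[ab cb]|nabc] := pselect ((a <= b)%O /\ (c <= b)%O); last first.
  by exists 0%N => ab cb; case: nabc.
suff [n Hn] : exists n, forall xz : T a * T c,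
    [/\ Kn n a xz.1, closure (G b a) xz.1, Kn n c xz.2, closure (G b c) xz.2
       & phi b a xz.1 = phi b c xz.2] ->
    ((a <= c)%O /\ G c a xz.1 /\ phi c a xz.1 = xz.2) \/
    ((c <= a)%O /\ G a c xz.2 /\ phi a c xz.2 = xz.1).
  by exists n => _ _ x z Kx Gx Kz Gz e; exact: (Hn (x, z) (And5 Kx Gx Kz Gz e)).
apply: compact_eventually (compact_setX (Ob_compact a) (Ob_compact c)) _ _.
  by move=> n xz [/Kn_Ob ? _ /Kn_Ob ? _].
move=> s y /all_and2 [H nQ] sy; have [Ka Ga Kc Gc e] := all_and5 H.
have [sy1 sy2] := cluster_seq_pair sy.
have Cy1 : C a y.1 := cluster_Kn_C sy1 Ka.
have Cy2 : C c y.2 := cluster_Kn_C sy2 Kc.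
have Wy1 := G_W ab _ (cluster_seq_closed sy1 (@closed_closure _ _) Ga).
have Wy2 := G_W cb _ (cluster_seq_closed sy2 (@closed_closure _ _) Gc).
have ey : phi b a y.1 = phi b c y.2.
  apply: (cluster_seq_eq_within (hT b) sy (phi_within_cont ab) (phi_within_cont cb))
    Wy1 Wy2 _ => n.
  by split; [exact: G_W ab _ (Ga n)|exact: G_W cb _ (Gc n)|exact: e].
have epsi : psi a y.1 = psi c y.2.
  by rewrite -(psi_phi ab (C_S _ _ Cy1) Wy1) ey psi_phi //; exact: C_S.
have [ac|ca] : (a <= c)%O \/ (c <= a)%O.
  apply: chart_images_comparable; exists (psi a y.1).
  by split; [exists y.1|rewrite epsi; exists y.2] => //; exact: C_S.
- have Ly : overlap c a y.1 by split => //; exists y.2.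
  have [n [Gn en]] := cluster_seq_factor ac ab cb sy1 Ly
    (phi_eq_of_psi_eq ac (C_S _ _ Cy1) (C_S _ _ Cy2) epsi) Wy2
    (fun n => And3 (Ga n) (Gc n) (e n)).
  by apply: (nQ n); left.
- have Ly : overlap a c y.2 by split => //; exists y.1.
  have [n [Gn en]] := cluster_seq_factor ca cb ab sy2 Ly
    (phi_eq_of_psi_eq ca (C_S _ _ Cy2) (C_S _ _ Cy1) (esym epsi)) Wy1
    (fun n => And3 (Gc n) (Ga n) (esym (e n))).
  by apply: (nQ n); right.
Qed.

Definition meets_above n a b c := (b <= a)%O -> (b <= c)%O -> forall y,
  Kn n b y -> closure (G a b) y -> closure (G c b) y ->
  Kn n a (phi a b y) -> Kn n c (phi c b y) ->
  ((a <= c)%O /\ G c a (phi a b y) /\ phi c a (phi a b y) = phi c b y) \/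
  ((c <= a)%O /\ G a c (phi c b y) /\ phi a c (phi c b y) = phi a b y).

Lemma meets_above_near a b c : \forall n \near \oo, meets_above n a b c.
Proof.
apply: near_oo_upclosed.
  move=> n m nm H ba bc y Ky Gay Gcy Kay Kcy.
  by apply: (H ba bc y) => //; exact: Kn_anti nm _ _.
have [[ba bc]|nabc] := pselect ((b <= a)%O /\ (b <= c)%O); last first.
  by exists 0%N => ba bc; case: nabc.
suff [n Hn] : exists n, forall y,
    [/\ Kn n b y, closure (G a b) y, closure (G c b) y, Kn n a (phi a b y)
       & Kn n c (phi c b y)] ->
    ((a <= c)%O /\ G c a (phi a b y) /\ phi c a (phi a b y) = phi c b y) \/
    ((c <= a)%O /\ G a c (phi c b y) /\ phi a c (phi c b y) = phi a b y).
  by exists n => _ _ y Ky Gay Gcy Kay Kcy; exact: Hn y (And5 Ky Gay Gcy Kay Kcy).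
apply: compact_eventually (Ob_compact b) _ _ => [n y [/Kn_Ob] //|s y].
move=> /all_and2 [/all_and5 [Ks Gas Gcs Kas Kcs] nQ] sy.
have Cy : C b y := cluster_Kn_C sy Ks.
have Way := G_W ba _ (cluster_seq_closed sy (@closed_closure _ _) Gas).
have Wcy := G_W bc _ (cluster_seq_closed sy (@closed_closure _ _) Gcs).
have sya := cluster_seq_comp sy (phi_cont_at ba Way).
have syc := cluster_seq_comp sy (phi_cont_at bc Wcy).
have Cay : C a (phi a b y) := cluster_Kn_C sya Kas.
have Ccy : C c (phi c b y) := cluster_Kn_C syc Kcs.
have epsi : psi a (phi a b y) = psi c (phi c b y).
  by rewrite !psi_phi //; exact: C_S.
have [ac|ca] : (a <= c)%O \/ (c <= a)%O.
  apply: chart_images_comparable; exists (psi a (phi a b y)).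
  by split; [exists (phi a b y)|rewrite epsi; exists (phi c b y)] => //; exact: C_S.
- have Ly : overlap c a (phi a b y) by split => //; exists (phi c b y).
  have [n Gn] := cluster_seq_open sya (G_open ac) (overlap_G ac _ Ly).
  apply: (nQ n); left; split => //; split => //.
  by rewrite -(phi_comp ba ac) //; [exact: G_W ba _ (Gas n)|exact: G_sub_W|
    exact: G_W bc _ (Gcs n)].
- have Ly : overlap a c (phi c b y) by split => //; exists (phi a b y).
  have [n Gn] := cluster_seq_open syc (G_open ca) (overlap_G ca _ Ly).
  apply: (nQ n); right; split => //; split => //.
  by rewrite -(phi_comp bc ca) //; [exact: G_W bc _ (Gcs n)|exact: G_sub_W|
    exact: G_W ba _ (Gas n)].
Qed.

(* [covers] is condition (4) for the shrunk coordinate changes, [absorbs]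
   transfers [~] from the closed domains [Wc] back to [W0], and the other three
   make [~] transitive on the [Wc]. *)
Definition tame n := forall a b c : P,
  [/\ absorbs n a b, covers n a b, composes n a b c, meets_below n a b c
     & meets_above n a b c].

Lemma tame_near : \forall n \near \oo, tame n.
Proof.
do 3 apply: filter_forall => ?.
by near=> n; split; near: n;
  [exact: absorbs_near|exact: covers_near|exact: composes_near|
   exact: meets_below_near|exact: meets_above_near].
Unshelve. all: by end_near.
Qed.

Section Shrunk.
Variable N : nat.
Hypothesis tameN : tame N.

Definition W0 p q : set (T q) := Un N q `&` G p q `&` phi p q @^-1` Un N p.
Definition Wc p q : set (T q) :=
  Kn N q `&` closure (G p q) `&` phi p q @^-1` Kn N p.

Lemma W0_id p : W0 p p = Un N p.
Proof.
rewrite /W0 G_id; apply/seteqP; split => [x [[]] //|x Ux].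
by split; [split|rewrite /= phi_id].
Qed.

Lemma W0_W {p q} : (q <= p)%O -> W0 p q `<=` W p q.
Proof. by move=> qp x [[_ /(G_sub_W qp)]]. Qed.

Lemma W0_Wc p q : W0 p q `<=` Wc p q.
Proof. by move=> x [[Ux Gx] Upx]; split; [split|]; exact: subset_closure. Qed.

Lemma Wc_W {p q} : (q <= p)%O -> Wc p q `<=` W p q.
Proof. by move=> qp x [[_ /(G_W qp)]]. Qed.

Lemma W0_open {p q} : (q <= p)%O -> open (W0 p q).
Proof.
move=> qp; have -> : W0 p q = Un N q `&` G p q `&` (W p q `&` phi p q @^-1` Un N p).
  apply/seteqP; split => x [[Ux Gx]]; last by case.
  by move=> Upx; split => //; split => //; exact: G_sub_W qp _ Gx.
apply: openI; first exact: openI (Un_open N q) (G_open qp).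
have := phi_within_cont qp; rewrite (continuous_open_subspace _ (open_W qp)).
by move/(continuous_inP _ (open_W qp)); apply; exact: Un_open.
Qed.

Lemma Wc_compact {p q} : (q <= p)%O -> compact (Wc p q).
Proof.
move=> qp; apply: compact_setI_preimage (phi_within_cont qp) (@closed_closure _ _).
  by apply: compact_closedI (Kn_compact N q) (@closed_closure _ _).
by move=> x [_ /(G_W qp)].
Qed.

Lemma gcs_weak_shrunk : gcs_weak Z (Un N) (fun p => S p `&` Un N p) psi W0 phi.
Proof.
split.
- move=> p; have [lc sep _ emb oS] := chartP p; split.
  + exact: (sub_locally_compact_open (hT p) lc (Un_open N p)).
  + exact: (sub_separable_open sep (Un_open N p)).
  + by split; [move=> x []|exists (S p); split; [exact: closed_S|rewrite setIC]].
  + exact: (embedding_on_setI emb (Un_open N p)).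
  + by case: emb => _ _ /(_ _ (Un_open N p)) [V [oV ->]]; exact: openI.
- move=> p q qp; apply: coord_change_restrict (changeP qp) (W0_open qp) _ _.
    by move=> x W0x; split; [split|]; [case: W0x => -[]|exact: W0_W|case: W0x].
  move=> x y Sx Ux Sy Uy e; have [_ cov _ _ _] := tameN p q p.
  have Gx := cov qp x y Sx Sy (subset_closure Ux) (subset_closure Uy) e.
  by split; [split|rewrite /= (phi_eq_of_psi_eq qp Sx Sy e)].
- by move=> p; split; [exact: W0_id|move=> x _; exact: phi_id].
- move=> p q r rq qp x W0x W0y W0z; apply: phi_comp => //.
  + exact: W0_W rq _ W0x.
  + exact: W0_W qp _ W0y.
  + exact: W0_W (le_trans rq qp) _ W0z.
- split.
  + move=> p q [z [[x [Sx _] ex] [y [Sy _] ey]]]; apply: chart_images_comparable.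
    by exists z; split; [exists x|exists y].
  + move=> z /Z_C [p [c Cc <-]]; exists p; exists c => //.
    by split; [exact: C_S|exact: C_Un].
Qed.

Local Notation relc := (gcs_rel Wc phi).

Lemma relc_via_G {a c} {u : T a} : (a <= c)%O ->
  Kn N a u -> G c a u -> Kn N c (phi c a u) ->
  relc (existT _ a u) (existT _ c (phi c a u)).
Proof.
by move=> ac Ku Gu Kw; right; left; split => //; split => //; split; [split|]
  => //; exact: subset_closure.
Qed.

Lemma relc_W0 x y : in_union (Un N) x -> in_union (Un N) y ->
  relc x y -> gcs_rel W0 phi x y.
Proof.
case: x => a u; case: y => b v; rewrite /in_union /= => Uu Uv.
case=> [->|[[/= ab [[[Ku Gu] Kv] ev]]|[/= ba [[[Kv Gv] Ku] eu]]]]; first by left.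
- have [abs _ _ _ _] := tameN b a b; subst v.
  by right; left; split => //=; split => //; split; [split|] => //; exact: abs.
- have [abs _ _ _ _] := tameN a b a; subst u.
  by right; right; split => //=; split => //; split; [split|] => //; exact: abs.
Qed.

Lemma relc_up_up {a b c} {u : T a} : (a <= b)%O -> (b <= c)%O ->
  Wc b a u -> Wc c b (phi b a u) ->
  relc (existT _ a u) (existT _ c (phi c b (phi b a u))).
Proof.
move=> ab bc [[Ku Gu] Kv] [[_ Gv] Kw]; have ac := le_trans ab bc.
have [_ _ comp _ _] := tameN a b c.
have Gu' := comp ab bc u Ku Gu Kv Gv Kw.
have e : phi c a u = phi c b (phi b a u).
  by apply: (phi_comp ab bc); [exact: G_W ab _ Gu|exact: G_W bc _ Gv|exact: G_sub_W].
by rewrite -e; apply: relc_via_G => //; rewrite e.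
Qed.

Lemma relc_trans {x y z} : relc x y -> relc y z -> relc x z.
Proof.
move=> r1 r2; case: (r2) => [<- //|]; case: (r1) => [-> _ //|].
case: x y z {r1 r2} => [a u] [b v] [c w].
case=> [[/= ab [Wu ev]]|[/= ba [Wv eu]]] [[/= bc [Wv' ew]]|[/= cb [Ww ev']]].
- by subst v w; exact: relc_up_up ab bc Wu Wv'.
- have [[Ku Gu] _] := Wu; have [[Kw Gw] _] := Ww.
  have [_ _ _ below _] := tameN a b c.
  case: (below ab cb u w Ku Gu Kw Gw (etrans (esym ev) ev')) =>
    [[ac [Gu' e]]|[ca [Gw' e]]].
    by rewrite -e; apply: relc_via_G => //; rewrite e.
  by rewrite -e; apply: gcs_rel_sym; apply: relc_via_G => //; rewrite e.
- have [[Kv Gav] Kav] := Wv; have [[_ Gcv] Kcv] := Wv'.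
  have [_ _ _ _ above] := tameN a b c; subst u w.
  case: (above ba bc v Kv Gav Gcv Kav Kcv) => [[ac [Gu <-]]|[ca [Gw <-]]].
    by apply: relc_via_G => //; rewrite -(phi_comp ba ac) //;
      [exact: G_W ba _ Gav|exact: G_sub_W|exact: G_W bc _ Gcv].
  by apply: gcs_rel_sym; apply: relc_via_G => //; rewrite -(phi_comp bc ca) //;
    [exact: G_W bc _ Gcv|exact: G_sub_W|exact: G_W ba _ Gav].
- by subst u v; apply: gcs_rel_sym; exact: relc_up_up cb ba Ww Wv.
Qed.

Lemma gcs_equiv_shrunk : gcs_equiv (Un N) W0 phi.
Proof.
move=> x y z Ux _ Uz r1 r2; apply: relc_W0 => //.
by apply: relc_trans (gcs_rel_mono W0_Wc r1) (gcs_rel_mono W0_Wc r2).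
Qed.

Definition sat (E : set {p : P & T p}) (c : P) : set (T c) :=
  [set w | Kn N c w /\ exists2 e, E e & relc e (existT _ c w)].

Lemma satE (E : set {p : P & T p}) c : sat E c =
  Kn N c `&` [set w | E (existT _ c w)] `|`
  \bigcup_(a in [set a | (a <= c)%O])
     phi c a @` ([set u | E (existT _ a u)] `&` Wc c a) `|`
  \bigcup_(a in [set a | (c <= a)%O])
     (Wc a c `&` phi a c @^-1` [set u | E (existT _ a u)]).
Proof.
apply/seteqP; split => [w [Kw [[a u] Eu]]|w].
  case=> [e|[[/= ac [Wu ->]]|[/= ca [Ww eu]]]].
  - by left; left; split; rewrite //= -e.
  - by left; right; exists a => //; exists u.
  - by right; exists a => //; split; rewrite //= -eu.
case=> [[[Kw Ew]|[a /= ac [u [Eu Wu] <-]]]|[a /= ca [Ww Ew]]].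
- by split => //; exists (existT _ c w) => //; left.
- by split; [case: Wu|exists (existT _ a u) => //; right; left].
- split; first by case: Ww => -[].
  by exists (existT _ a (phi a c w)) => //; right; right.
Qed.

Lemma sat_closed (E : set {p : P & T p}) c :
  (forall a, closed [set u | E (existT _ a u)]) -> closed (sat E c).
Proof.
move=> cE; rewrite satE; apply: closedU; first apply: closedU.
- exact: closedI (@closed_closure _ _) (cE c).
- apply: closed_bigcup => [|a /= ac]; first exact: finite_finset.
  have sub : [set u | E (existT _ a u)] `&` Wc c a `<=` W c a.
    by move=> u [_ /(Wc_W ac)].
  apply: (compact_closed (hT c)); apply: continuous_compact.
    exact: continuous_subspaceW sub (phi_within_cont ac).
  by rewrite setIC; apply: compact_closedI (Wc_compact ac) (cE a).
- apply: closed_bigcup => [|a /= ca]; first exact: finite_finset.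
  apply: (compact_closed (hT c)).
  exact: compact_setI_preimage (Wc_compact ca) (Wc_W ca) (phi_within_cont ca) (cE a).
Qed.

Lemma sat_refl (E : set {p : P & T p}) c w :
  Kn N c w -> E (existT _ c w) -> sat E c w.
Proof. by move=> Kw Ew; split => //; exists (existT _ c w) => //; left. Qed.

Lemma closed_fiber_point (x : {p : P & T p}) a :
  closed [set u : T a | existT _ a u = x].
Proof.
case: x => b v; case: (eqVneq a b) => [eab|nab].
  subst b.
  rewrite (_ : [set u | _] = [set v]).
    exact: compact_closed (hT a) (@compact_set1 _ v).
  by apply/seteqP; split => u; [exact: existT_inj2|move=> ->].
rewrite (_ : [set u | _] = set0); first exact: closed0.
by apply/seteqP; split => // u e; have := existT_inj1 e; apply/eqP.
Qed.

Lemma saturated_complement {E : set {p : P & T p}} :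
  (forall a, closed [set u | E (existT _ a u)]) ->
  let A := [set e | in_union (Un N) e /\ ~ sat E (projT1 e) (projT2 e)] in
  union_open (Un N) A /\ saturated (Un N) W0 phi A.
Proof.
move=> cE A; split.
  split=> [e []//|c]; exists (~` sat E c); split; last by apply/seteqP; split => u [].
  exact: closed_openC (sat_closed _ _ cE).
move=> [a u] [b v] Uu Uv [_ nEu] r; split => // -[Kv [e Ee r']]; apply: nEu.
split; first exact: subset_closure.
by exists e => //; apply: relc_trans r' (gcs_rel_sym (gcs_rel_mono W0_Wc r)).
Qed.

Lemma sat_point_compact (z : {p : P & T p}) c : compact (sat [set z] c).
Proof.
apply: subclosed_compact (sat_closed _ _ (closed_fiber_point z)) (Kn_compact N c) _.
by move=> w [].
Qed.

Lemma separate_sat_points x y c : ~ relc x y ->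
  exists V : set (T c) * set (T c), [/\ open V.1, open V.2, sat [set x] c `<=` V.1,
    sat [set y] c `<=` V.2 & V.1 `&` V.2 = set0].
Proof.
move=> nxy; have disj : sat [set x] c `&` sat [set y] c = set0.
  apply/seteqP; split => // w [[_ [_ -> rx]] [_ [_ -> ry]]].
  exact: nxy (relc_trans rx (gcs_rel_sym ry)).
have [V1 [V2 VP]] := compact_disjoint_separation (hT c) (chart_locally_compact c)
  (sat_point_compact x c) (sat_point_compact y c) disj.
by exists (V1, V2).
Qed.

Definition outside (O : forall c, set (T c)) : set {p : P & T p} :=
  [set e | Kn N (projT1 e) (projT2 e) /\ ~ O (projT1 e) (projT2 e)].

Lemma closed_fiber_outside {O : forall c, set (T c)} :
  (forall c, open (O c)) -> forall c, closed [set w | outside O (existT _ c w)].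
Proof.
move=> oO c; apply: (@closedI _ (Kn N c) (~` O c)); first exact: closed_closure.
exact: open_closedC.
Qed.

Lemma gcs_quotient_hausdorff_shrunk : gcs_quotient_hausdorff (Un N) W0 phi.
Proof.
move=> [a u] [b v] Uu Uv nuv.
have nR : ~ relc (existT _ a u) (existT _ b v) by move=> r; apply: nuv; exact: relc_W0.
have [V VP] := choice_dep (fun c => separate_sat_points _ _ c nR).
have V1_open c : open (V c).1 by case: (VP c).
have V2_open c : open (V c).2 by case: (VP c).
have [oA sA] := saturated_complement (closed_fiber_outside V1_open).
have [oB sB] := saturated_complement (closed_fiber_outside V2_open).
eexists; eexists; split; [exact: (conj oA sA)|exact: (conj oB sB)|..].
- split => //= -[Ku [[c w] [Kw nVw] r]]; apply: nVw.
  have [_ _ + _ _] := VP c; apply; split => //.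
  by exists (existT _ a u) => //; exact: gcs_rel_sym.
- split => //= -[Kv [[c w] [Kw nVw] r]]; apply: nVw.
  have [_ _ _ + _] := VP c; apply; split => //.
  by exists (existT _ b v) => //; exact: gcs_rel_sym.
- apply/seteqP; split => // -[c w] [[Uw nA] [_ nB]].
  have [_ _ _ _ VV] := VP c; suff : ((V c).1 `&` (V c).2) w by rewrite VV.
  split; apply: contrapT => nV.
  + apply: nA; apply: sat_refl => /=; first exact: subset_closure.
    by split => //; exact: subset_closure.
  + apply: nB; apply: sat_refl => /=; first exact: subset_closure.
    by split => //; exact: subset_closure.
Qed.


Lemma tame_has_strong_shrinking : has_strong_shrinking.
Proof.
exists (Un N), W0; split.
- move=> p; split => //; first by exists (Un N p); split; [exact: Un_open|rewrite setTI].
  by rewrite setIT; exact: Kn_compact.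
- move=> p q qp; split; first exact: W0_W.
    by exists (W0 p q); split; [exact: W0_open|rewrite setIidr //; exact: W0_W].
  have clW0 : closure (W0 p q) `<=` Kn N q `&` closure (G p q).
    by move=> x Wx; split; apply: closureS Wx => y [[]].
  rewrite setIidl; last by move=> x /clW0 [_ /(G_W qp)].
  apply: subclosed_compact (@closed_closure _ _) (Kn_compact N q) _.
  by move=> x /clW0 [].
- split; [exact: gcs_weak_shrunk|exact: gcs_equiv_shrunk|
          exact: gcs_quotient_hausdorff_shrunk].
Qed.

End Shrunk.

Lemma overlap_nbhs_has_strong_shrinking : has_strong_shrinking.
Proof.
by have [N _ tN] := tame_near; exact: tame_has_strong_shrinking (tN N (leqnn N)).
Qed.

End Tame.

Lemma compact_cover_has_strong_shrinking : has_strong_shrinking.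
Proof.
have [G [GP G_id]] := exists_overlap_nbhs.
by apply: (@overlap_nbhs_has_strong_shrinking G G_id) => p q /GP [].
Qed.

End Shrinking.

Lemma gcs_weak_has_strong_shrinking : has_strong_shrinking.
Proof.
have [C [C_compact C_S Z_C]] := exists_compact_cover.
have nbhs_C p : exists Ob : set (T p), [/\ open Ob, C p `<=` Ob & compact (closure Ob)].
  have [Ob [oOb COb _ cOb]] := compact_closure_nbhs (hT p) (chart_locally_compact p)
    (C_compact p) openT (@subsetT _ _).
  by exists Ob.
have [Ob ObP] := choice_dep nbhs_C.
apply: (@compact_cover_has_strong_shrinking C Ob C_compact C_S Z_C) => p.
all: by case: (ObP p).
Qed.

End GoodCoordinateSystem.

Theorem theorem2p9 (R : realType) (dP : Order.disp_t) (P : finPOrderType dP)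
  (T : P -> pseudoMetricType R) (X : pseudoMetricType R) (Z : set X)
  (S : forall p, set (T p)) (psi : forall p, T p -> X)
  (W : forall p q : P, set (T q)) (phi : forall p q : P, T q -> T p) :
  hausdorff_space X -> sub_locally_compact (@setT X) ->
  sub_separable (@setT X) ->
  (forall p, hausdorff_space (T p)) ->
  compact Z ->
  gcs_weak Z (fun p => @setT (T p)) S psi W phi ->
  exists (U0 : forall p, set (T p)) (W0 : forall p q : P, set (T q)),
    [/\ (forall p, shrinking_of (U0 p) setT),
        (forall p q : P, (q <= p)%O -> shrinking_of (W0 p q) (W p q)) &
        gcs_strong Z U0 (fun p => S p `&` U0 p) psi W0 phi].
Proof.
by move=> hX _ _ hT cZ gw; exact: gcs_weak_has_strong_shrinking.
Qed.
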